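(* Let $0<q<1$, and for each integer $k\ge1$ let $a=a(k)>0$ (a positive, bounded function of $k$). Define \[u_n=\frac{(k+ak^{-1})^n}{n!}\,q^{-n(2k-n-1)/2}\ (n\ge0),\qquad v_j=u_{2k-j-1}-u_j\ (0\le j\le k-1).\] Then for every integer $k\ge1$, $v_j>0$ for all $0\le j\le k-1$. Furthermore, if $a=a_0+O(k^{-1})$ as $k\to\infty$ for some constant $a_0>0$, then there exists a positive integer $N(q)$ such that for every $N\ge N(q)$ and every $k\ge q^{-3N}$, one has $v_j<v_{j+1}$ for all $0\le j\le k-N$. *)

From mathcomp Require Import all_boot all_order all_algebra.
From mathcomp Require Import reals.
Set Implicit Arguments. Unset Strict Implicit. Unset Printing Implicit Defensive.
Import Order.TTheory GRing.Theory Num.Theory.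
Local Open Scope ring_scope.

(* Exponent n(2k-n-1)/2 as an integer (n(2k-n-1) is always even). *)
Definition uexp (k n : nat) : int :=
  divz (n%:Z * (2 * k%:Z - n%:Z - 1)) 2.

Definition u (R : realType) (q : R) (a : nat -> R) (k n : nat) : R :=
  (k%:R + a k / k%:R) ^+ n / (n`!)%:R * q ^ (- uexp k n).

Definition v (R : realType) (q : R) (a : nat -> R) (k j : nat) : R :=
  u q a k (2 * k - j - 1)%N - u q a k j.

(* Write x = k + a/k and B_n = x^n/n!.  The exponent e_n = n(2k-n-1)/2 is invariant under
   n |-> 2k-1-n, so v_j = q^(-e_j) (B_(2k-1-j) - B_j).  Pairing the factors of
   B_(2k-1-j) / B_j as (j+1+t)(2k-1-j-t) <= k^2 <= x^2 gives x B_j <= k B_(2k-1-j), hence v_j > 0.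
   Since e_(j+1) = e_j + (k-j-1), monotonicity amounts to
   B_(2k-1-j) - B_j < q^(-(k-j-1)) (B_(2k-2-j) - B_(j+1)).  The recurrence (n+1) B_(n+1) = x B_n
   together with the pairing inequality bounds the left side by (3 + 2a/k^2 + (k-j-1)^2/a) times
   the gap on the right, and this factor, quadratic in k - j, is beaten by the geometric factor
   once k - j >= N for N large in terms of q, sup a and a0. *)

From mathcomp Require Import all_boot all_order all_algebra.
From mathcomp Require Import reals.
From mathcomp Require Import lra zify ring.
Set Implicit Arguments. Unset Strict Implicit. Unset Printing Implicit Defensive.
Import Order.TTheory GRing.Theory Num.Theory.
Local Open Scope ring_scope.

Definition powfact (R : numFieldType) (x : R) (n : nat) : R := x ^+ n / (n`!)%:R.

Lemma powfactS (R : numFieldType) (x : R) n :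
  powfact x n.+1 * n.+1%:R = powfact x n * x.
Proof.
have fact_neq0 : (n`!)%:R != 0 :> R by rewrite pnatr_eq0 -lt0n fact_gt0.
rewrite /powfact factS natrM exprSr; field.
by rewrite fact_neq0 addrC natr1 pnatr_eq0.
Qed.

Lemma powfact_gt0 (R : numFieldType) (x : R) n : 0 < x -> 0 < powfact x n.
Proof. by move=> x_gt0; rewrite divr_gt0 ?exprn_gt0 // ltr0n fact_gt0. Qed.

Section PairedFactors.
Variables (R : realFieldType) (x : R) (k : nat).
Hypothesis k_le_x : k%:R <= x.

Lemma powfact_pair_le d i : (i + d).+1 = k ->
  x * powfact x i <= k%:R * powfact x (i + d.*2).+1.
Proof.
elim: d i => [|d IHd] i idk.
  by rewrite addn0 in idk *; rewrite -idk [leRHS]mulrC powfactS mulrC.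
have x_gt0 : 0 < x by apply: lt_le_trans k_le_x; rewrite ltr0n -idk.
set m := (i + d.*2).+2.
have inner := IHd i.+1 ltac:(by rewrite addSnnS).
have -> : (i + d.+1.*2).+1 = m.+1 by rewrite /m doubleS !addnS.
have pair_le : i.+1%:R * m.+1%:R <= x ^+ 2.
  apply: le_trans (_ : k%:R ^+ 2 <= _); last by rewrite lerXn2r ?nnegrE ?ler0n ?(ltW x_gt0).
  by rewrite -natrM -natrX ler_nat -idk /m -!mul2n; nia.
have lhsE : x * powfact x i * m.+1%:R = powfact x i.+1 * (i.+1%:R * m.+1%:R).
  by rewrite mulrA powfactS (mulrC x).
have rhsE : k%:R * powfact x m.+1 * m.+1%:R = x * (k%:R * powfact x m).
  by rewrite -mulrA powfactS; ring.
rewrite -(ler_pM2r (ltr0Sn R m)) lhsE rhsE.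
apply: le_trans (_ : powfact x i.+1 * x ^+ 2 <= _).
  by rewrite ler_pM2l ?powfact_gt0.
have -> : powfact x i.+1 * x ^+ 2 = x * (x * powfact x i.+1) by ring.
by rewrite ler_pM2l.
Qed.

Lemma powfact_mirror_le j : (j < k)%N ->
  x * powfact x j <= k%:R * powfact x (2 * k - j - 1).
Proof.
move=> jk; have -> : (2 * k - j - 1 = (j + (k - j - 1).*2).+1)%N by rewrite -mul2n; lia.
by apply: powfact_pair_le; lia.
Qed.

End PairedFactors.

Lemma powfact_mirror_lt (R : realFieldType) (x : R) k j : k%:R < x -> (j < k)%N ->
  powfact x j < powfact x (2 * k - j - 1).
Proof.
move=> k_lt_x jk; have k_gt0 : 0 < k%:R :> R by rewrite ltr0n; lia.
rewrite -(ltr_pM2l k_gt0); apply: lt_le_trans (powfact_mirror_le (ltW k_lt_x) jk).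
by rewrite ltr_pM2r // powfact_gt0 // (lt_trans k_gt0).
Qed.

Section GapRecursion.
Variables (R : realFieldType) (a : R).
Hypothesis a_gt0 : 0 < a.

Lemma gap_recursion_le (k n b0 b1 c0 c1 : R) : 0 < k -> 0 <= n -> 0 < b1 ->
  b1 * (k - n) = b0 * (k + a / k) -> c0 * (k + n) = c1 * (k + a / k) ->
  (k + a / k) * b1 <= k * c1 ->
  c0 - b0 <= (3 + 2 * a / k ^+ 2 + n ^+ 2 / a) * (c1 - b1).
Proof.
set x := k + a / k => k_gt0 n_ge0 b1_gt0 b_rec c_rec mirror.
have k_neq0 : k != 0 by rewrite gt_eqF.
have a_neq0 : a != 0 by rewrite gt_eqF.
have x_gt0 : 0 < x by rewrite addr_gt0 ?divr_gt0.
set E := c1 - b1; set w := 2 + a / k ^+ 2 + n ^+ 2 / a.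
have key : (c0 - b0) * (x * (k + n)) = E * x ^+ 2 + b1 * (a * w).
  have -> : (c0 - b0) * (x * (k + n)) = x * (c0 * (k + n)) - b0 * x * (k + n) by ring.
  by rewrite c_rec -b_rec /E /w /x; field; rewrite ?a_neq0 ?k_neq0.
(* The mirror inequality controls b1 by the gap E, so the error term of [key] is a multiple of E. *)
have ab1_le : a * b1 <= k ^+ 2 * E.
  have := ler_wpM2l (ltW k_gt0) mirror.
  have -> : k * (x * b1) = k ^+ 2 * b1 + a * b1 by rewrite /x; field.
  by rewrite /E; lra.
have E_ge0 : 0 <= E.
  have ab1_gt0 := mulr_gt0 a_gt0 b1_gt0.
  by rewrite -(pmulr_rge0 _ (exprn_gt0 2 k_gt0)); lra.
have w_ge0 : 0 <= w.
  have := divr_ge0 (ltW a_gt0) (sqr_ge0 k); have := divr_ge0 (sqr_ge0 n) (ltW a_gt0).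
  by rewrite /w; lra.
have x_ge_k : k <= x by rewrite lerDl divr_ge0 ?ltW.
have sqr_k_le : k ^+ 2 <= x * (k + n) by rewrite expr2 ler_pM //; lra.
have E_part : E * x ^+ 2 <= x / k * E * (x * (k + n)).
  have -> : x / k * E * (x * (k + n)) = E * x ^+ 2 + E * x ^+ 2 * (n / k) by field.
  by rewrite lerDl !mulr_ge0 ?invr_ge0 ?(ltW k_gt0) ?(ltW x_gt0).
have b_part : b1 * (a * w) <= w * E * (x * (k + n)).
  have -> : b1 * (a * w) = w * (a * b1) by ring.
  rewrite -mulrA ler_wpM2l //; apply: le_trans ab1_le _.
  by rewrite [_ * E]mulrC ler_wpM2l.
have xT_gt0 : 0 < x * (k + n) by rewrite mulr_gt0 //; lra.
rewrite -(ler_pM2r xT_gt0) key.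
have -> : 3 + 2 * a / k ^+ 2 + n ^+ 2 / a = x / k + w.
  by rewrite /w /x; field; rewrite ?a_neq0 ?k_neq0.
lra.
Qed.

Local Notation x k := (k%:R + a / k%:R).

Lemma powfact_gap_le (k j : nat) : (j.+1 < k)%N ->
  powfact (x k) (2 * k - j - 1) - powfact (x k) j <=
  (3 + 2 * a / k%:R ^+ 2 + (k - j - 1)%:R ^+ 2 / a) *
  (powfact (x k) (2 * k - j.+1 - 1) - powfact (x k) j.+1).
Proof.
move=> jk; have k_gt0 : 0 < k%:R :> R by rewrite ltr0n; lia.
have x_ge_k : k%:R <= x k by rewrite lerDl divr_ge0 ?ltW.
have -> : (2 * k - j - 1 = (2 * k - j.+1 - 1).+1)%N by lia.
apply: gap_recursion_le; rewrite ?ler0n ?powfact_gt0 //; first exact: lt_le_trans x_ge_k.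
- have -> : k%:R - (k - j - 1)%:R = j.+1%:R :> R by rewrite -natrB; [congr _%:R | ]; lia.
  exact: powfactS.
- have -> : k%:R + (k - j - 1)%:R = (2 * k - j.+1 - 1).+1%:R :> R.
    by rewrite -natrD; congr _%:R; lia.
  exact: powfactS.
- exact: powfact_mirror_le.
Qed.

End GapRecursion.

Lemma gap_factor_le (R : realFieldType) (a0 a M : R) (k n : nat) :
  0 < a0 -> a0 / 2 <= a -> a <= M -> (0 < k)%N -> (0 < n)%N ->
  3 + 2 * a / k%:R ^+ 2 + n%:R ^+ 2 / a <= (3 + 2 * M + 2 / a0) * n%:R ^+ 2.
Proof.
move=> a0_gt0 a_ge a_le k_gt0 n_gt0.
have a_gt0 : 0 < a by lra.
have k2_ge1 : 1 <= k%:R ^+ 2 :> R by rewrite -natrX ler1n expn_gt0 k_gt0.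
have n2_ge1 : 1 <= n%:R ^+ 2 :> R by rewrite -natrX ler1n expn_gt0 n_gt0.
have a_part : 2 * a / k%:R ^+ 2 <= 2 * M by rewrite ler_pdivrMr; nra.
have n_part : n%:R ^+ 2 / a <= 2 / a0 * n%:R ^+ 2.
  rewrite ler_pdivrMr // mulrAC ler_peMl ?sqr_ge0 //.
  by rewrite mulrAC ler_pdivlMr // mul1r; lra.
nra.
Qed.

Lemma ler_bernoulli (R : realFieldType) (h : R) n :
  0 <= h -> 1 + n%:R * h <= (1 + h) ^+ n.
Proof.
move=> h_ge0; elim: n => [|n IHn]; first by rewrite mul0r addr0 expr0.
have nhh_ge0 : 0 <= n%:R * h * h by rewrite !mulr_ge0.
rewrite exprSr -natr1; apply: le_trans (_ : (1 + n%:R * h) * (1 + h) <= _); first lra.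
by rewrite ler_pM2r ?IHn //; lra.
Qed.

Lemma sqr_lt_expr_eventually (R : archiRealFieldType) (Q D : R) :
  1 < Q -> 0 <= D -> exists n0 : nat, forall n, (n0 <= n)%N -> D * n%:R ^+ 2 < Q ^+ n.
Proof.
move=> Q_gt1 D_ge0.
have [h h_gt0 ->] : exists2 h, 0 < h & Q = 1 + h.
  by exists (Q - 1); rewrite ?subr_gt0 // addrC subrK.
set b := Num.bound (25 * D / h ^+ 3).
have b_gt : 25 * D / h ^+ 3 < b%:R.
  by apply: archi_boundP; rewrite divr_ge0 ?exprn_ge0 ?(ltW h_gt0) //; lra.
exists (3 * b.+1)%N => n n0_le_n.
set m := (n %/ 3)%N.
have m_gt : (b < m)%N by rewrite /m leq_divRL //; lia.
have n_le : (n <= 5 * m)%N.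
  by rewrite /m; have := divn_eq n 3; have := ltn_pmod n (isT : (0 < 3)%N); lia.
have mh_ge0 : 0 <= m%:R * h by rewrite mulr_ge0 // ltW.
have cube_lt : (m%:R * h) ^+ 3 < (1 + h) ^+ n.
  apply: lt_le_trans (_ : (1 + m%:R * h) ^+ 3 <= _).
    by rewrite ltrXn2r ?nnegrE //; lra.
  apply: le_trans (_ : (1 + h) ^+ (m * 3) <= _).
    have bern := ler_bernoulli m (ltW h_gt0).
    by rewrite exprM lerXn2r ?nnegrE ?exprn_ge0 //; lra.
  by apply: ler_weXn2l; [lra | rewrite /m; have := divn_eq n 3; lia].
apply: le_lt_trans cube_lt.
have m_big : 25 * D <= m%:R * h ^+ 3.
  rewrite -ler_pdivrMr ?exprn_gt0 //; apply/ltW/(lt_le_trans b_gt).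
  by rewrite ler_nat ltnW.
apply: le_trans (_ : D * (5 * m)%N%:R ^+ 2 <= _).
  by rewrite ler_wpM2l // lerXn2r ?nnegrE ?ler0n // ler_nat.
have -> : D * (5 * m)%N%:R ^+ 2 = 25 * D * m%:R ^+ 2 by rewrite natrM; ring.
have -> : (m%:R * h) ^+ 3 = m%:R * h ^+ 3 * m%:R ^+ 2 by ring.
by rewrite ler_wpM2r ?exprn_ge0.
Qed.

Lemma eventually_ge_half (R : archiRealFieldType) (a : nat -> R) (a0 C : R) (K : nat) :
  0 < a0 -> (forall k, (K <= k)%N -> (0 < k)%N -> `|a k - a0| <= C / k%:R) ->
  exists K1 : nat, forall k, (K1 <= k)%N -> a0 / 2 <= a k.
Proof.
move=> a0_gt0 a_near; set b := Num.bound `|2 * C / a0|.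
have b_gt : 2 * C / a0 < b%:R := le_lt_trans (ler_norm _) (archi_boundP (normr_ge0 _)).
exists (maxn (maxn K 1) b) => k; rewrite !geq_max => /andP[/andP[Kk k_gt0] bk].
have kR_gt0 : 0 < k%:R :> R by rewrite ltr0n.
have C_le : C / k%:R <= a0 / 2.
  rewrite ler_pdivrMr // mulrC mulrA ler_pdivlMr // [_ * 2]mulrC.
  by rewrite ltr_pdivrMr // in b_gt; apply/ltW/(lt_le_trans b_gt); rewrite ler_pM2r // ler_nat.
have dist := a_near k Kk k_gt0; rewrite distrC in dist.
have := le_trans (le_trans (ler_norm _) dist) C_le; lra.
Qed.

Lemma uexp_mirror k j : (j < k)%N -> uexp k (2 * k - j - 1) = uexp k j.
Proof.
move=> jk; rewrite /uexp; congr (divz _ 2).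
have -> : (2 * k - j - 1)%N%:Z = 2 * k%:Z - j%:Z - 1 by lia.
ring.
Qed.

Lemma uexpS k j : (j < k)%N -> uexp k j.+1 = uexp k j + (k - j - 1)%N.
Proof.
move=> jk; rewrite /uexp.
have -> : (k - j - 1)%N%:Z = k%:Z - j%:Z - 1 by lia.
rewrite [RHS]addrC -(@divzMDl _ _ 2) //.
congr (divz _ 2); rewrite -addn1 PoszD; ring.
Qed.

Section Gaps.
Variables (R : realType) (q : R) (a : nat -> R).
Hypothesis q_gt0 : 0 < q.
Local Notation x k := (k%:R + a k / k%:R).

Lemma v_factor k j : (j < k)%N ->
  v q a k j = q ^ (- uexp k j) * (powfact (x k) (2 * k - j - 1) - powfact (x k) j).
Proof. by move=> jk; rewrite /v /u /powfact uexp_mirror //; ring. Qed.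

Lemma v_gt0 k j : 0 < a k -> (j < k)%N -> 0 < v q a k j.
Proof.
move=> ak_gt0 jk; rewrite v_factor // mulr_gt0 ?exprz_gt0 // subr_gt0.
apply: powfact_mirror_lt => //; rewrite ltrDl divr_gt0 // ltr0n; lia.
Qed.

Lemma v_ltS k j : 0 < a k -> (j.+1 < k)%N ->
  3 + 2 * a k / k%:R ^+ 2 + (k - j - 1)%:R ^+ 2 / a k < q ^- (k - j - 1) ->
  v q a k j < v q a k j.+1.
Proof.
move=> ak_gt0 jk factor_lt; have jk1 := ltnW jk.
rewrite !v_factor // uexpS // opprD expfzDr ?gt_eqF //.
rewrite -mulrA ltr_pM2l ?exprz_gt0 // -exprnN.
apply: le_lt_trans (powfact_gap_le ak_gt0 jk) _.
rewrite ltr_pM2r // subr_gt0; apply: powfact_mirror_lt => //.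
by rewrite ltrDl divr_gt0 // ltr0n; lia.
Qed.

End Gaps.

Theorem lemma2p1 (R : realType) (q : R) (a : nat -> R) :
  0 < q < 1 ->
  (forall k : nat, (0 < k)%N -> 0 < a k) ->
  (exists M : R, forall k : nat, (0 < k)%N -> a k <= M) ->
  (forall k : nat, (0 < k)%N -> forall j : nat, (j <= k - 1)%N -> 0 < v q a k j) /\
  (forall a0 : R, 0 < a0 ->
     (exists (C : R) (K : nat), forall k : nat, (K <= k)%N -> (0 < k)%N ->
        `|a k - a0| <= C / k%:R) ->
     exists N0 : nat, (0 < N0)%N /\
       forall N k : nat, (N0 <= N)%N -> q ^- (3 * N) <= k%:R ->
         forall j : nat, (j + N <= k)%N -> v q a k j < v q a k j.+1).
Proof.
move=> /andP[q_gt0 q_lt1] a_gt0 [M a_le_M]; split.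
  by move=> k k_gt0 j jk; apply: v_gt0; [|exact: a_gt0|lia].
move=> a0 a0_gt0 [C [K a_near]].
have [K1 a_ge] := eventually_ge_half a0_gt0 a_near.
have M_ge0 : 0 <= M := ltW (lt_le_trans (a_gt0 1%N isT) (a_le_M 1%N isT)).
have D_ge0 : 0 <= 3 + 2 * M + 2 / a0 by have := divr_ge0 (ler0n R 2) (ltW a0_gt0); lra.
have Q_gt1 : 1 < q^-1 by rewrite invf_gt1.
have [n0 geom] := sqr_lt_expr_eventually Q_gt1 D_ge0.
exists (maxn (maxn 2 K1) n0.+1); split=> [|N k]; first by lia.
rewrite !geq_max => /andP[/andP[N_ge2 N_ge_K1] N_gt_n0] _ j jN.
have k_gt0 : (0 < k)%N by lia.
apply: v_ltS => //; [exact: a_gt0 | lia |].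
apply: le_lt_trans (gap_factor_le a0_gt0 (a_ge k _) (a_le_M k k_gt0) k_gt0 _) _; [lia | lia |].
by rewrite -exprVn; apply: geom; lia.
Qed.
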